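(* Consider the multi-agent setting and the finite-time optimal control problems $\mathrm{FTOCP}^{(m)}_k(\hat N)$ described in the context. Fix a time $k$ and suppose that for every agent $m\in\{1,\dots,M\}$ some problem $\mathrm{FTOCP}^{(m)}_k(\hat N^{(m)})$ (for some integer $\hat N^{(m)}\ge 0$, possibly with the additional constraint $\|\mathbf{v}_{1|k}^{(m)}\|_2\le \bar a\hat N^{(m)}\Delta t$) is feasible, with an optimal solution denoted by a star, and that every agent applies its first optimal input $\mathbf{a}^{(m)\star}_{0|k}$, so that $\mathbf{s}^{(m)}_{k+1}=\mathbf{A}\mathbf{s}^{(m)}_k+\mathbf{B}\mathbf{a}^{(m)\star}_{0|k}$. Then: (a) for all agents $m\neq j$, $\|\mathbf{p}^{(m)}_{k+1}-\mathbf{p}^{(j)}_{k+1}\|_2\ge 2\rho$ (no collision at time $k+1$); (b) for all agents $m\neq j$ and all prediction steps $i=1,\dots,N$, the optimal contingency positions satisfy $\|\tilde{\mathbf{p}}^{(m)\star}_{i|k}-\tilde{\mathbf{p}}^{(j)\star}_{i|k}\|_2\ge 2\rho$.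
   Context: Setting. Let $\Delta t>0$, $\bar a>0$, $\bar v>0$, $\rho>0$, integers $M\ge 2$ and $N\ge1$, and $\tilde N:=\lceil \bar v/(\bar a\Delta t)\rceil$ with $\tilde N\le N-1$ ($\lceil r\rceil$ = smallest integer $\ge r$). Each agent $m=1,\dots,M$ has state $\mathbf{s}^{(m)}_k=(\mathbf{p}^{(m)}_k,\mathbf{v}^{(m)}_k)\in\mathbb{R}^3\times\mathbb{R}^3$ (position, velocity) and input $\mathbf{a}^{(m)}_k\in\mathbb{R}^3$, with exact dynamics $\mathbf{s}_{k+1}=\mathbf{A}\mathbf{s}_k+\mathbf{B}\mathbf{a}_k$, where $\mathbf{A}=\begin{bmatrix}I_3&\Delta t I_3\\0&I_3\end{bmatrix}$, $\mathbf{B}=\begin{bmatrix}\tfrac{(\Delta t)^2}{2}I_3\\ \Delta t I_3\end{bmatrix}$. Each agent is a ball of radius $\rho$ centred at its position; a collision means two centres are at distance $<2\rho$. Each agent $m$ has a position constraint set $\mathbb{S}^{(m)}\subseteq\mathbb{R}^3$ and a cost function $J^{(m)}$ of its nominal inputs and states. Every agent measures all agents' states exactly; there is no communication. Reference contingency plan. For a state $(\mathbf{p},\mathbf{v})$ let $n=\lceil\|\mathbf{v}\|_2/(\bar a\Delta t)\rceil$. The reference contingency trajectory starts at $(\mathbf{p},\mathbf{v})$ and applies the input $-\mathbf{v}/(n\Delta t)$ for steps $0,\dots,n-1$ and $\mathbf{0}$ afterwards (if $n=0$ the agent stays at $\mathbf{p}$). Denote by $\mathbf{r}^{(j)}_{i|k}$,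 $i=0,1,2,\dots$, the positions of the reference contingency trajectory computed from $\mathbf{s}^{(j)}_k$ (so $\mathbf{r}^{(j)}_{0|k}=\mathbf{p}^{(j)}_k$); every agent can compute it for every agent. Collision-avoidance constraint of agent $m$ w.r.t. agent $j\neq m$ at step $i$: with $d^{(j,m)}_{i|k}=\|\mathbf{r}^{(j)}_{i|k}-\mathbf{r}^{(m)}_{i|k}\|_2$ (assumed nonzero so that the constraint is defined), $\mathbf{g}^{(j,m)}_{i|k}=(\mathbf{r}^{(j)}_{i|k}-\mathbf{r}^{(m)}_{i|k})/d^{(j,m)}_{i|k}$ and $h^{(j,m)}_{i|k}=\mathbf{g}^{(j,m)\mathrm T}_{i|k}\mathbf{r}^{(m)}_{i|k}+\tfrac12 d^{(j,m)}_{i|k}-\rho$, a point $\mathbf{q}\in\mathbb{R}^3$ satisfies it iff $\mathbf{g}^{(j,m)\mathrm T}_{i|k}\mathbf{q}\le h^{(j,m)}_{i|k}$. $\mathrm{FTOCP}^{(m)}_k(\hat N)$, for an integer $\hat N\ge0$: minimize $J^{(m)}$ over $\mathbf{a}^{(m)}_{0|k},\dots,\mathbf{a}^{(m)}_{N-1|k}$ subject to: nominal states $\mathbf{s}^{(m)}_{0|k}=\mathbf{s}^{(m)}_k$, $\mathbf{s}^{(m)}_{i+1|k}=\mathbf{A}\mathbf{s}^{(m)}_{i|k}+\mathbf{B}\mathbf{a}^{(m)}_{i|k}$; $\|\mathbf{a}^{(m)}_{i|k}\|_2\le\bar a$ for $i=0,\dots,N-1$; the position of $\mathbf{s}^{(m)}_{i|k}$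 lies in $\mathbb{S}^{(m)}$ for $i=1,\dots,N$; contingency states $\tilde{\mathbf{s}}^{(m)}_{1|k}=\mathbf{s}^{(m)}_{1|k}$, and, writing $\mathbf{v}^{(m)}_{1|k}$ for the velocity of $\mathbf{s}^{(m)}_{1|k}$, contingency inputs $\tilde{\mathbf{a}}^{(m)}_{i|k}=-\mathbf{v}^{(m)}_{1|k}/(\hat N\Delta t)$ and $\tilde{\mathbf{s}}^{(m)}_{i+1|k}=\mathbf{A}\tilde{\mathbf{s}}^{(m)}_{i|k}+\mathbf{B}\tilde{\mathbf{a}}^{(m)}_{i|k}$ for $i=1,\dots,\hat N$, and $\tilde{\mathbf{s}}^{(m)}_{i|k}=\tilde{\mathbf{s}}^{(m)}_{\hat N+1|k}$ for $\hat N+1< i\le N$; the position of $\tilde{\mathbf{s}}^{(m)}_{i|k}$ lies in $\mathbb{S}^{(m)}$ for $i=2,\dots,\hat N+1$; and for every $j\ne m$ and every $i=1,\dots,N$ the position $\tilde{\mathbf{p}}^{(m)}_{i|k}$ of $\tilde{\mathbf{s}}^{(m)}_{i|k}$ satisfies the collision-avoidance constraint of agent $m$ w.r.t. $j$ at step $i$. *)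

From HB Require Import structures.
From mathcomp Require Import all_boot all_order all_algebra.
From mathcomp Require Import reals.
Set Implicit Arguments. Unset Strict Implicit. Unset Printing Implicit Defensive.
Import Order.TTheory GRing.Theory Num.Theory.
Local Open Scope ring_scope.

Section Defs.
Variable R : realType.

Definition vec := 'rV[R]_3.
(* a state (position, velocity) *)
Definition state := (vec * vec)%type.

Definition dot (u v : vec) : R := \sum_(i < 3) u ord0 i * v ord0 i.
Definition norm2 (u : vec) : R := Num.sqrt (dot u u).

(* exact dynamics s_{k+1} = A s_k + B a_k, A = [I dt I; 0 I], B = [dt^2/2 I; dt I] *)
Definition step (dt : R) (s : state) (a : vec) : state :=
  (s.1 + dt *: s.2 + (dt ^+ 2 / 2) *: a, s.2 + dt *: a).

(* the input sequence a_{0|k},...,a_{N-1|k} read as a nat-indexed sequence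
   (only indices < N are ever used) *)
Definition inp (N : nat) (a : {ffun 'I_N -> vec}) (i : nat) : vec :=
  if insub i is Some j then a j else 0.

Fixpoint nomtraj (dt : R) (s0 : state) (u : nat -> vec) (i : nat) : state :=
  match i with
  | 0 => s0
  | i'.+1 => step dt (nomtraj dt s0 u i') (u i')
  end.

Definition nom (dt : R) (N : nat) (s0 : state) (a : {ffun 'I_N -> vec}) (i : nat)
  : state := nomtraj dt s0 (inp a) i.

Definition nomstates (dt : R) (N : nat) (s0 : state) (a : {ffun 'I_N -> vec})
  : {ffun 'I_N.+1 -> state} := [ffun i : 'I_N.+1 => nom dt s0 a i].

Fixpoint citer (dt : R) (c : vec) (n : nat) (s : state) : state :=
  match n with
  | 0 => s
  | n'.+1 => step dt (citer dt c n' s) c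
  end.

(* contingency states  s~_{i|k}, i >= 1 :  s~_1 = s_1, input -v_1/(Nhat dt)
   for i = 1..Nhat, then constant. *)
Definition cont (dt : R) (Nhat : nat) (s1 : state) (i : nat) : state :=
  citer dt (- ((Nhat%:R * dt)^-1 *: s1.2)) (minn i.-1 Nhat) s1.

Definition refn (dt abar : R) (s : state) : nat :=
  `|Num.ceil (norm2 s.2 / (abar * dt))|%N.
Definition refpos (dt abar : R) (s : state) (i : nat) : vec :=
  (citer dt (- ((( refn dt abar s)%:R * dt)^-1 *: s.2)) (minn i (refn dt abar s)) s).1.

Definition coll_ok (rho : R) (rj rm q : vec) : Prop :=
  let d := norm2 (rj - rm) in
  let g := d^-1 *: (rj - rm) in
  let h := dot g rm + d / 2 - rho in
  dot g q <= h.

(* feasibility for FTOCP^(m)_k(Nhat); [extra] adds ||v_{1|k}|| <= abar Nhat dt *)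
Definition feasible (dt abar rho : R) (M N : nat) (S : 'I_M -> vec -> Prop)
  (s : 'I_M -> state) (m : 'I_M) (Nhat : nat) (extra : bool)
  (a : {ffun 'I_N -> vec}) : Prop :=
  [/\ (forall i : 'I_N, norm2 (a i) <= abar),
      (forall i : nat, (1 <= i <= N)%N -> S m (nom dt (s m) a i).1),
      (forall i : nat, (2 <= i <= Nhat.+1)%N ->
          S m (cont dt Nhat (nom dt (s m) a 1) i).1),
      (forall j : 'I_M, j != m -> forall i : nat, (1 <= i <= N)%N ->
          coll_ok rho (refpos dt abar (s j) i) (refpos dt abar (s m) i)
                  (cont dt Nhat (nom dt (s m) a 1) i).1)
    & (extra -> norm2 (nom dt (s m) a 1).2 <= abar * Nhat%:R * dt)].

Definition optimal (dt abar rho : R) (M N : nat) (S : 'I_M -> vec -> Prop)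
  (J : 'I_M -> {ffun 'I_N -> vec} -> {ffun 'I_N.+1 -> state} -> R)
  (s : 'I_M -> state) (m : 'I_M) (Nhat : nat) (extra : bool)
  (a : {ffun 'I_N -> vec}) : Prop :=
  feasible dt abar rho S s m Nhat extra a /\
  forall a' : {ffun 'I_N -> vec}, feasible dt abar rho S s m Nhat extra a' ->
    J m a (nomstates dt (s m) a) <= J m a' (nomstates dt (s m) a').

End Defs.

(** The collision-avoidance constraints that agents [m] and [j] impose at step
    [i] are two half-spaces bounded by planes orthogonal to the unit vector [g]
    from [r^(m)_{i|k}] to [r^(j)_{i|k}], each at distance [rho] from the
    bisecting plane of these two points.  Adding the two inequalities gives
    [g . (q_j - q_m) >= 2 rho], and since [g] is a unit vector the distance
    between any two points satisfying them is at least [2 rho]; this is (b).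
    At step [1] the contingency state is the first nominal state, which is the
    state actually reached at time [k+1], so (a) is the case [i = 1] of (b). *)

From HB Require Import structures.
From mathcomp Require Import all_boot all_order all_algebra.
From mathcomp Require Import reals.
From mathcomp Require Import lra.
Import Order.TTheory GRing.Theory Num.Theory.
Local Open Scope ring_scope.

Section EuclideanSpace.
Variable R : realType.
Implicit Types (u w z : vec R) (c : R).

Lemma dotC u w : dot u w = dot w u.
Proof. by apply: eq_bigr => i _; rewrite mulrC. Qed.

Lemma dotBl u w z : dot (u - w) z = dot u z - dot w z.
Proof. by rewrite /dot -sumrB; apply: eq_bigr => i _; rewrite !mxE mulrBl. Qed.

Lemma dotZl c u z : dot (c *: u) z = c * dot u z.
Proof. by rewrite /dot mulr_sumr; apply: eq_bigr => i _; rewrite mxE mulrA. Qed.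

Lemma dotNl u z : dot (- u) z = - dot u z.
Proof. by rewrite -scaleN1r dotZl mulN1r. Qed.

Lemma dotBr u w z : dot z (u - w) = dot z u - dot z w.
Proof. by rewrite dotC dotBl !(dotC z). Qed.

Lemma dotZr c u z : dot z (c *: u) = c * dot z u.
Proof. by rewrite dotC dotZl dotC. Qed.

Lemma dot_ge0 u : 0 <= dot u u.
Proof. by apply: sumr_ge0 => i _; rewrite -expr2 sqr_ge0. Qed.

Lemma dot_eq0 u : (dot u u == 0) = (u == 0).
Proof.
apply/idP/eqP => [/eqP u0 | ->]; last by rewrite /dot big1 // => i _; rewrite mxE mul0r.
have /psumr_eq0P u0i := u0; apply/rowP => i; rewrite mxE.
by apply/eqP; rewrite -sqrf_eq0 expr2 u0i // => k _; rewrite -expr2 sqr_ge0.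
Qed.

Lemma sqr_norm2 u : norm2 u ^+ 2 = dot u u.
Proof. by rewrite /norm2 sqr_sqrtr // dot_ge0. Qed.

Lemma norm2_eq0 u : (norm2 u == 0) = (u == 0).
Proof. by rewrite -sqrf_eq0 sqr_norm2 dot_eq0. Qed.

Lemma norm2_distC u w : norm2 (u - w) = norm2 (w - u).
Proof. by rewrite /norm2 -opprB dotNl dotC dotNl opprK. Qed.

(* Expand [0 <= |w - (g . w) g|^2] using [g . g = 1]. *)
Lemma dot_unit_le_norm2 (g w : vec R) : dot g g = 1 -> dot g w <= norm2 w.
Proof.
move=> gg; set c := dot g w.
have : 0 <= dot (w - c *: g) (w - c *: g) by exact: dot_ge0.
rewrite !(dotBl, dotBr, dotZl, dotZr) gg (dotC w g) -/c => sq_le.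
rewrite (le_trans (ler_norm c)) // -sqrtr_sqr /norm2 ler_wsqrtr //; lra.
Qed.

Lemma coll_ok_pair_dist (rho : R) (rj rm qj qm : vec R) : rj != rm ->
  coll_ok rho rj rm qm -> coll_ok rho rm rj qj -> 2 * rho <= norm2 (qm - qj).
Proof.
rewrite /coll_ok /= (norm2_distC rm rj) -subr_eq0 -norm2_eq0 => d_neq0.
set d := norm2 (rj - rm) in d_neq0 *; set g := d^-1 *: (rj - rm).
have gg : dot g g = 1.
  by rewrite dotZl dotZr -sqr_norm2 -/d expr2 mulKf // mulVf.
have g_dist : dot g rj - dot g rm = d.
  by rewrite -dotBr dotZl -sqr_norm2 -/d expr2 mulrA mulVf ?mul1r.
rewrite -(opprB rj rm) scalerN dotNl dotNl -/g => le_m le_j.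
rewrite norm2_distC (le_trans _ (dot_unit_le_norm2 g (qj - qm) gg)) // dotBr; lra.
Qed.

End EuclideanSpace.

Lemma cont_at1 (R : realType) (dt : R) (Nhat : nat) (s1 : state R) :
  cont dt Nhat s1 1 = s1.
Proof. by rewrite /cont min0n. Qed.

Theorem lemma1 (R : realType) (dt abar vbar rho : R) (M N : nat)
  (hdt : 0 < dt) (habar : 0 < abar) (hvbar : 0 < vbar) (hrho : 0 < rho)
  (hM : (2 <= M)%N) (hN : (1 <= N)%N)
  (hNt : (`|Num.ceil (vbar / (abar * dt))|%N <= N - 1)%N)
  (S : 'I_M -> vec R -> Prop)
  (J : 'I_M -> {ffun 'I_N -> vec R} -> {ffun 'I_N.+1 -> state R} -> R)
  (s : 'I_M -> state R)
  (Nhat : 'I_M -> nat) (extra : 'I_M -> bool)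
  (astar : 'I_M -> {ffun 'I_N -> vec R})
  (snext : 'I_M -> state R)
  (hdist : forall m j : 'I_M, m != j -> forall i : nat, (1 <= i <= N)%N ->
      refpos dt abar (s j) i != refpos dt abar (s m) i)
  (hopt : forall m : 'I_M,
      optimal dt abar rho S J s m (Nhat m) (extra m) (astar m))
  (hnext : forall m : 'I_M, snext m = step dt (s m) (inp (astar m) 0)) :
  (forall m j : 'I_M, m != j ->
      2 * rho <= norm2 ((snext m).1 - (snext j).1)) /\
  (forall m j : 'I_M, m != j -> forall i : nat, (1 <= i <= N)%N ->
      2 * rho <= norm2 ((cont dt (Nhat m) (nom dt (s m) (astar m) 1) i).1
                        - (cont dt (Nhat j) (nom dt (s j) (astar j) 1) i).1)).
Proof.
have cont_sep : forall m j : 'I_M, m != j -> forall i : nat, (1 <= i <= N)%N ->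
      2 * rho <= norm2 ((cont dt (Nhat m) (nom dt (s m) (astar m) 1) i).1
                        - (cont dt (Nhat j) (nom dt (s j) (astar j) 1) i).1).
  move=> m j m_neq_j i hi.
  have [[_ _ _ coll_m _] _] := hopt m; have [[_ _ _ coll_j _] _] := hopt j.
  apply: coll_ok_pair_dist (hdist _ _ m_neq_j _ hi) _ _.
  - by apply: coll_m; rewrite // eq_sym.
  - exact: coll_j.
split=> // m j m_neq_j.
by have := cont_sep m j m_neq_j 1%N; rewrite hN !cont_at1 !hnext => /(_ isT).
Qed.
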